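(* Let $C$ be an $(n,k)$-code with generator matrix $G$ and let $\ell\ge2$. (a) $C$ is $\operatorname{rMDS}_0(\ell)$ if and only if $C$ is $\operatorname{MDS}(\ell)$. (b) If $C$ is $\operatorname{rMDS}_d(\ell)$, then $C$ is $\operatorname{rMDS}_{d'}(\ell)$ for all $d'\in\{d+1,\dots,k\}$. (c) If $C$ is $\operatorname{rMDS}_d(\ell)$, then $C$ is $\operatorname{rMDS}_d(\ell')$ for all $\ell'\in\{2,\dots,\ell-1\}$. (d) $C$ is $\operatorname{rMDS}_d(2)$ if and only if every $k-d$ columns of $G$ are linearly independent.
   Context: For a matrix $V$ and $A\subseteq[n]$, $V|_A$ denotes the columns in $A$ and $V_A$ their span. A generic $m\times n$ matrix $W$ has independent indeterminate entries. A code with $k\times n$ generator matrix $V$ is $\operatorname{MDS}(\ell)$ if for all $A_1,\dots,A_\ell\subseteq[n]$, $\dim(V_{A_1}\cap\dots\cap V_{A_\ell})=\dim(W_{A_1}\cap\dots\cap W_{A_\ell})$ for generic $k\times n$ $W$. $\mathcal G_{A_1,\dots,A_\ell}[V]$ is the block matrix whose $i$-th block row has $I_k$ in the first block column and $V|_{A_i}$ in block column $i+1$ (zeros elsewhere). $C$ is $\operatorname{rMDS}_d(\ell)$ ($0\le d\le k$) if $\mathcal G_{A_1,\dots,A_\ell}[G]$ has full column rank whenever $\mathcal G_{A_1,\dots,A_\ell}[W]$ does, for generic $(k-d)\times n$ $W$. *)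

From HB Require Import structures.
From mathcomp Require Import all_boot all_order all_algebra.
From mathcomp Require Import fraction.
From mathcomp Require Import mpoly.
Set Implicit Arguments. Unset Strict Implicit. Unset Printing Implicit Defensive.
Import GRing.Theory.
Local Open Scope ring_scope.

(* V|_A : the submatrix of V consisting of the columns indexed by A
   (in increasing order of index). *)
Definition colsub_set (R : Type) (m n : nat) (A : {set 'I_n}) (V : 'M[R]_(m, n))
  : 'M[R]_(m, #|A|) :=
  colsub (fun j : 'I_#|A| => enum_val j) V.

(* V_A : the column span of V|_A, as a (square) row-space matrix of
   column vectors in R^m. *)
Definition colspan (R : fieldType) (m n : nat) (A : {set 'I_n}) (V : 'M[R]_(m, n))
  : 'M[R]_m := <<(colsub_set A V)^T>>%MS.

Definition dim_cap (R : fieldType) (m n l : nat) (A : 'I_l -> {set 'I_n})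
  (V : 'M[R]_(m, n)) : nat :=
  \rank (\bigcap_(i < l) colspan (A i) V)%MS.

(* Generic m x n matrix: independent indeterminate entries, viewed in the
   field of rational functions F(x_{ij}). *)
Definition genfield (F : fieldType) (m n : nat) : fieldType :=
  {fraction {mpoly F[m * n]}}.

Definition generic (F : fieldType) (m n : nat) : 'M[genfield F m n]_(m, n) :=
  \matrix_(i < m, j < n) tofrac ('X_(mxvec_index i j) : {mpoly F[m * n]}).

Definition Gblock (R : fieldType) (m n l : nat) (A : 'I_l -> {set 'I_n})
  (V : 'M[R]_(m, n)) :=
  row_mx (\mxcol_(i < l) (1%:M : 'M[R]_m))
         (\mxblock_(i < l, j < l)
            (if i == j then colsub_set (A j) V else 0 : 'M[R]_(m, #|A j|))).

Definition full_col_rank (R : fieldType) (p q : nat) (M : 'M[R]_(p, q)) : bool :=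
  \rank M == q.

Definition MDS (F : fieldType) (k n l : nat) (V : 'M[F]_(k, n)) : Prop :=
  forall A : 'I_l -> {set 'I_n},
    dim_cap A V = dim_cap A (generic F k n).

Definition rMDS (F : fieldType) (k n : nat) (d l : nat) (G : 'M[F]_(k, n)) : Prop :=
  forall A : 'I_l -> {set 'I_n},
    full_col_rank (Gblock A (generic F (k - d) n)) ->
    full_col_rank (Gblock A G).

(* Transposed, G_{A_1,...,A_l}[V] spans D + X_1 + ... + X_l inside (F^m)^l, where D is the
   diagonal copy of F^m and X_i is V_{A_i} placed in the i-th coordinate. The X_i are
   independent and D meets their sum in the diagonal copy of V_{A_1} :&: ... :&: V_{A_l}, so
     rank G_{A}[V] + dim (V_{A_1} :&: ... :&: V_{A_l}) = m + \sum_i rank V|_{A_i},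
   and G_{A}[V] has full column rank iff every V|_{A_i} has independent columns and the
   V_{A_i} meet trivially.
   A nonzero minor of a specialization of the generic matrix is the image of a nonzero minor
   over the fraction field, so ranks only drop under specialization. Specializing W_{k-d} to
   W_{k-d'} padded with zero rows gives (b). For (a), extending the identity columns of
   G_{A}[W] greedily to a maximal independent set of columns gives a full-column-rank G_{B}[W]
   with every B_i inside A_i and the same rank, so G_{A}[G] has the rank of G_{A}[W]; the
   constant families then recover the ranks of the V|_S, and the rank identity the
   intersections. A family of l' sets is a family of l sets with repetitions, whence (c).
   For l = 2, full column rank means that A_1 and A_2 are disjoint with A_1 :|: A_2
   independent, and extending A_1 :|: A_2 to a set of size k - d gives (d). *)

From HB Require Import structures.
From mathcomp Require Import all_boot all_order all_algebra.
From mathcomp Require Import fraction mpoly zify.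
Local Open Scope ring_scope.

Set Implicit Arguments. Unset Strict Implicit. Unset Printing Implicit Defensive.
Import GRing.Theory.

Lemma exists_card_superset (I : finType) (T : {set I}) c :
  (#|T| <= c <= #|I|)%N -> exists2 S : {set I}, T \subset S & #|S| = c.
Proof.
have [k] := ubnP (c - #|T|); elim: k T => // k IH T lt_k /andP[le_T_c le_c_I].
have [<-|neq_T_c] := eqVneq #|T| c; first by exists T.
have /set0Pn[x] : ~~ (~: T == set0) by rewrite -card_gt0; have := cardsC T; lia.
rewrite in_setC => xNT; have [||S sxTS cardS] := IH (x |: T).
- by rewrite cardsU1 xNT; lia.
- by rewrite cardsU1 xNT; apply/andP; split; lia.
by exists S => //; apply: subset_trans sxTS; apply: subsetUr.
Qed.

Lemma mxrank_adds_gen_rV (F : fieldType) r N (v : 'rV[F]_N) (Y : 'M[F]_(r, N)) :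
  ~~ (v <= Y)%MS -> \rank (<<v>> + Y)%MS = (\rank Y).+1.
Proof.
move=> vNY; have : (Y < <<v>> + Y)%MS.
  by rewrite ltmxE addsmxSr addsmx_sub genmxE submx_refl andbT.
rewrite ltmxErank addsmxSr => /= lt_rk; apply/eqP; rewrite eqn_leq lt_rk andbT.
by rewrite (leq_trans (mxrank_adds_leqif _ _).1) // mxrank_gen rank_rV; case: (_ != 0).
Qed.

Lemma eqmx_mxcol (F : fieldType) p q (r : 'I_p -> nat) (Y : forall i, 'M[F]_(r i, q)) :
  (\mxcol_i Y i :=: \sum_i <<Y i>>)%MS.
Proof.
apply/eqmxP/andP; split.
  apply/row_subP => s; rewrite row_mxcol.
  by rewrite (sumsmx_sup (tagnat.sig1 s)) // genmxE row_sub.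
apply/sumsmx_subP => i _; rewrite genmxE -(mxcolK Y i).
exact: rowsub_sub.
Qed.

Lemma mxrank_bigcap_genMfree (F : fieldType) l p q (r : 'I_l -> nat)
    (X : forall i, 'M[F]_(r i, p)) (P : 'M[F]_(p, q)) :
  (0 < l)%N -> row_free P ->
  \rank (\bigcap_i <<X i *m P>>)%MS = \rank (\bigcap_i <<X i>>)%MS.
Proof.
move=> l_gt0 freeP; rewrite -(mxrankMfree _ freeP); apply/eqmx_rank/andP; split.
  set Y := (\bigcap_i _)%MS; pose i0 := Ordinal l_gt0.
  have /submxP[D YD] : (Y <= X i0 *m P)%MS by rewrite (bigcapmx_inf i0) // genmxE.
  rewrite YD mulmxA submxMfree //; apply/sub_bigcapmxP => i _.
  by rewrite genmxE -(submxMfree _ _ freeP) -mulmxA -YD (bigcapmx_inf i) // genmxE.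
apply/sub_bigcapmxP => i _; rewrite genmxE submxMr //.
by rewrite (bigcapmx_inf i) // genmxE.
Qed.

Lemma full_col_rank_leq (K K' : fieldType) p p' q (M : 'M[K]_(p, q)) (N : 'M[K']_(p', q)) :
  full_col_rank M -> (\rank M <= \rank N)%N -> full_col_rank N.
Proof.
move=> /eqP rkM le_MN; rewrite /full_col_rank eqn_leq rank_leq_col /=.
by rewrite (leq_trans _ le_MN) // rkM.
Qed.

Lemma mxrank_mxsub (K : fieldType) p q p' q' (f : 'I_p' -> 'I_p) (g : 'I_q' -> 'I_q)
    (M : 'M[K]_(p, q)) :
  (\rank (mxsub f g M) <= \rank M)%N.
Proof.
rewrite mxsubrc (leq_trans (mxrankS (rowsub_sub _ _))) //.
by rewrite -mxrank_tr -[leqRHS]mxrank_tr trmx_mxsub mxrankS ?rowsub_sub.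
Qed.

Lemma exists_nonzero_minor (K : fieldType) p q (M : 'M[K]_(p, q)) :
  exists f : 'I_(\rank M) -> 'I_p, exists g : 'I_(\rank M) -> 'I_q,
    \det (mxsub f g M) != 0.
Proof.
pose f := maxrankfun M; pose M1 := rowsub f M.
have rkM1 : \rank M1^T = \rank M by rewrite mxrank_tr; apply/eqP/maxrowsub_free.
have [g freeg] : exists g : 'I_(\rank M1^T) -> 'I_q, row_free (rowsub g M1^T).
  by exists (maxrankfun M1^T); apply: maxrowsub_free.
rewrite rkM1 in g freeg *; exists f, g.
have -> : mxsub f g M = (rowsub g M1^T)^T by apply/matrixP => i j; rewrite !mxE.
by rewrite det_tr -unitfE -unitmxE -row_free_unit.
Qed.

Lemma mxrank_map_le_frac (R : idomainType) (K : fieldType) (phi : {rmorphism R -> K})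
    p q (M : 'M[R]_(p, q)) :
  (\rank (map_mx phi M) <= \rank (map_mx (@tofrac R) M))%N.
Proof.
have [f [g]] := exists_nonzero_minor (map_mx phi M).
rewrite -map_mxsub det_map_mx => minor_neq0.
have : mxsub f g (map_mx (@tofrac R) M) \in unitmx.
  rewrite unitmxE unitfE -map_mxsub det_map_mx tofrac_eq0.
  by apply: contraNneq minor_neq0 => ->; rewrite rmorph0.
by move/mxrank_unit <-; apply: mxrank_mxsub.
Qed.

Section BasisExtension.
Variables (F : fieldType) (I : finType) (mU N : nat).
Variables (U : 'M[F]_(mU, N)) (w : I -> 'rV[F]_N).

Lemma adds_sums_subP (Q : {set I}) r (Z : 'M[F]_(r, N)) :
  reflect ((U <= Z)%MS /\ {in Q, forall p, w p <= Z}%MS)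
          (U + \sum_(p in Q) <<w p>> <= Z)%MS.
Proof.
rewrite addsmx_sub; apply: (iffP andP) => -[sUZ sQZ]; split=> //.
  by move=> p pQ; apply: submx_trans sQZ; rewrite (sumsmx_sup p) ?genmxE.
by apply/sumsmx_subP => p pQ; rewrite genmxE sQZ.
Qed.

Lemma adds_sumsS (Q Q' : {set I}) :
  Q \subset Q' -> (U + \sum_(p in Q) <<w p>> <= U + \sum_(p in Q') <<w p>>)%MS.
Proof.
move=> sQQ'; have /adds_sums_subP[sU sQ'] := submx_refl (U + \sum_(p in Q') <<w p>>)%MS.
by apply/adds_sums_subP; split=> // p /(subsetP sQQ')/sQ'.
Qed.

Lemma exists_basis_extension (Q : {set I}) : exists2 Q' : {set I}, Q' \subset Q &
  \rank (U + \sum_(p in Q') <<w p>>)%MS = (\rank U + #|Q'|)%N /\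
  (U + \sum_(p in Q) <<w p>> == U + \sum_(p in Q') <<w p>>)%MS.
Proof.
have [k] := ubnP #|Q|; elim: k Q => // k IH Q.
have [->|[q qQ]] := set_0Vmem Q => [_|szQ].
  by exists set0; rewrite ?sub0set // big_set0 cards0 addn0 addsmx0 submx_refl.
have /IH[Q' sQ'Qq [rkQ' /andP[sQQ' _]]] : (#|Q :\ q| < k)%N.
  by move: szQ; rewrite (cardsD1 q Q) qQ.
have sQ'Q : Q' \subset Q := subset_trans sQ'Qq (subsetDl _ _).
have spanQ (T : {set I}) : Q' \subset T -> (w q <= U + \sum_(p in T) <<w p>>)%MS ->
    (U + \sum_(p in Q) <<w p>> <= U + \sum_(p in T) <<w p>>)%MS.
  move=> sQ'T wqT; have sUT := addsmxSl U (\sum_(p in T) <<w p>>)%MS.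
  have /adds_sums_subP[_ sQq] := submx_trans sQQ' (adds_sumsS sQ'T).
  apply/adds_sums_subP; split=> // p pQ.
  by have [->|pNq] := eqVneq p q; last by rewrite sQq // in_setD1 pNq.
have [wqQ' | wqNQ'] := boolP (w q <= U + \sum_(p in Q') <<w p>>)%MS.
  by exists Q' => //; rewrite rkQ' spanQ // adds_sumsS.
have qNQ' : q \notin Q' by apply: contraFN (setD11 q Q) => /(subsetP sQ'Qq).
have sqQ'Q : q |: Q' \subset Q by rewrite subUset sub1set qQ.
exists (q |: Q') => //; split.
  rewrite big_setU1 //= addsmxA (addsmxC U) -addsmxA mxrank_adds_gen_rV //.
  by rewrite rkQ' cardsU1 qNQ' addnS.
rewrite spanQ ?adds_sumsS ?subsetUr //.
by rewrite (submx_trans _ (addsmxSr _ _)) // (sumsmx_sup q) ?setU11 ?genmxE.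
Qed.

End BasisExtension.

Section BlockEmbedding.
Variables (F : fieldType) (m l : nat).

Definition blk_emb (i : 'I_l) : 'M[F]_(m, \sum_(j < l) m) :=
  \mxrow_j (if j == i then 1%:M else 0 : 'M_m).

Definition diag_emb : 'M[F]_(m, \sum_(j < l) m) := \mxrow_(j < l) (1%:M : 'M_m).

Lemma submxrow_blk_emb r (X : 'M[F]_(r, m)) i j :
  submxrow (X *m blk_emb i) j = if j == i then X else 0.
Proof. by rewrite mul_mxrow mxrowK; case: eqP; rewrite ?mulmx1 ?mulmx0. Qed.

Lemma submxrow_diag_emb r (X : 'M[F]_(r, m)) j : submxrow (X *m diag_emb) j = X.
Proof. by rewrite mul_mxrow mxrowK mulmx1. Qed.

Lemma submxrow_eq0 r (Y : 'M[F]_(r, \sum_(j < l) m)) :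
  (forall j, submxrow Y j = 0) -> Y = 0.
Proof. by move=> Y0; rewrite -(submxrowK Y) (eq_mxrow Y0) mxrow0. Qed.

Lemma sum_submxrow_blk_emb r (Y : 'M[F]_(r, \sum_(j < l) m)) :
  \sum_i submxrow Y i *m blk_emb i = Y.
Proof.
rewrite -[RHS]submxrowK -[LHS]submxrowK; apply: eq_mxrow => j.
rewrite submxrow_sum (bigD1 j) //= submxrow_blk_emb eqxx big1 ?addr0 // => i.
by rewrite submxrow_blk_emb eq_sym => /negPf ->.
Qed.

Lemma row_free_blk_emb i : row_free (blk_emb i).
Proof.
apply: inj_row_free => v /(congr1 (fun M => submxrow M i)).
by rewrite submxrow_blk_emb eqxx submxrow0.
Qed.

Lemma row_free_diag_emb : (0 < l)%N -> row_free diag_emb.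
Proof.
move=> l_gt0; apply: inj_row_free => v /(congr1 (fun M => submxrow M (Ordinal l_gt0))).
by rewrite submxrow_diag_emb submxrow0.
Qed.

Lemma sub_sums_blk_embP (P : pred 'I_l) (r : 'I_l -> nat)
    (X : forall i, 'M[F]_(r i, m)) p (Y : 'M[F]_(p, \sum_(j < l) m)) :
  (Y <= \sum_(j | P j) <<X j *m blk_emb j>>)%MS <->
  (forall i, submxrow Y i <= if P i then X i else 0)%MS.
Proof.
split=> [/sub_sumsmxP[u ->] i | subY].
  have termE j : exists2 D, u j *m <<X j *m blk_emb j>>%MS = D *m (X j *m blk_emb j)
      & submxrow (D *m (X j *m blk_emb j)) i = if i == j then D *m X j else 0.
    have /submxP[D ->] : (<<X j *m blk_emb j>> <= X j *m blk_emb j)%MS.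
      by rewrite genmxE.
    exists (u j *m D); first by rewrite mulmxA.
    by rewrite -mul_submxrow submxrow_blk_emb; case: eqP; rewrite ?mulmx0.
  rewrite submxrow_sum; case: ifP => Pi.
    apply: summx_sub => j _; have [D -> ->] := termE j.
    by case: eqP => [->|_]; rewrite ?submxMl ?sub0mx.
  rewrite big1 ?sub0mx // => j Pj; have [D -> ->] := termE j.
  by case: eqVneq => // eij; rewrite eij Pj in Pi.
rewrite -(sum_submxrow_blk_emb Y); apply: summx_sub => i _.
move: (subY i); case: ifP => [Pi sYX | _]; last by move/submx0null->; rewrite mul0mx sub0mx.
by apply: (sumsmx_sup i) => //; rewrite genmxE submxMr.
Qed.

Lemma mxdirect_sums_blk_emb (r : 'I_l -> nat) (X : forall i, 'M[F]_(r i, m)) :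
  mxdirect (\sum_i <<X i *m blk_emb i>>)%MS.
Proof.
apply/mxdirect_sumsP => i _; apply: submxrow_eq0 => j.
set Z := (_ :&: _)%MS.
have /sub_sums_blk_embP/(_ j) : (Z <= \sum_(j | j == i) <<X j *m blk_emb j>>)%MS.
  by rewrite big_pred1_eq capmxSl.
have /sub_sums_blk_embP/(_ j) :
  (Z <= \sum_(j | predT j && (j != i)) <<X j *m blk_emb j>>)%MS by apply: capmxSr.
by case: (eqVneq j i) => [-> /= /submx0null | _ _ /submx0null].
Qed.

End BlockEmbedding.

Section ColumnSpan.
Variables (F : fieldType) (m n : nat) (V : 'M[F]_(m, n)).
Implicit Types S T : {set 'I_n}.

Lemma eqmx_colsub_set S : ((colsub_set S V)^T :=: \sum_(j in S) <<row j V^T>>)%MS.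
Proof.
rewrite /colsub_set trmx_mxsub (big_enum_val (fun j => <<row j V^T>>%MS)).
apply/eqmxP/andP; split.
  by apply/row_subP => t; rewrite row_rowsub (sumsmx_sup t) ?genmxE.
by apply/sumsmx_subP => t _; rewrite genmxE -row_rowsub row_sub.
Qed.

Lemma colspanS S T : S \subset T -> (colspan S V <= colspan T V)%MS.
Proof.
move=> sST; rewrite /colspan !genmxE !eqmx_colsub_set.
by apply/sumsmx_subP => j jS; rewrite (sumsmx_sup j) ?(subsetP sST).
Qed.

Lemma colspanU S T : (colspan (S :|: T) V :=: colspan S V + colspan T V)%MS.
Proof.
apply/eqmxP/andP; split; last by rewrite addsmx_sub !colspanS ?subsetUl ?subsetUr.
rewrite /colspan genmxE eqmx_colsub_set; apply/sumsmx_subP => j /setUP[] jST;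
  [apply: submx_trans (addsmxSl _ _) | apply: submx_trans (addsmxSr _ _)];
  by rewrite !genmxE eqmx_colsub_set (sumsmx_sup j) ?genmxE.
Qed.

Lemma row_free_colsub_setS S T :
  S \subset T -> row_free (colsub_set T V)^T -> row_free (colsub_set S V)^T.
Proof.
move=> sST /eqP freeT; rewrite -row_leq_rank.
have : (\rank (colspan T V) <= \rank (colspan S V) + \rank (colspan (T :\: S) V))%N.
  by rewrite -{1}(setID T S) (setIidPr sST) colspanU (mxrank_adds_leqif _ _).1.
rewrite !mxrank_gen freeT.
have := rank_leq_row (colsub_set (T :\: S) V)^T.
by have := cardsDS sST; have := subset_leq_card sST; lia.
Qed.

Lemma dim_cap_const l S : (0 < l)%N ->
  dim_cap (fun _ : 'I_l => S) V = \rank (colsub_set S V)^T.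
Proof.
move=> l_gt0; rewrite /dim_cap -(mxrank_gen (colsub_set S V)^T).
apply/eqmx_rank/andP; split; last by apply/sub_bigcapmxP.
exact: (bigcapmx_inf (Ordinal l_gt0)).
Qed.

End ColumnSpan.

Section GblockRank.
Variables (F : fieldType) (m n l : nat).
Implicit Types (V : 'M[F]_(m, n)) (A : 'I_l -> {set 'I_n}).

Definition blk_space V A : 'M[F]_(\sum_(j < l) m) :=
  (\sum_i <<(colsub_set (A i) V)^T *m blk_emb F m i>>)%MS.

Lemma mxrank_Gblock V A : \rank (Gblock A V) = \rank (diag_emb F m l + blk_space V A)%MS.
Proof.
rewrite -mxrank_tr tr_row_mx tr_mxcol tr_mxblock mxblockEv -addsmxE.
apply/eqmx_rank/eqmxP/adds_eqmx.
  by rewrite /diag_emb (eq_mxrow (fun=> trmx1 _ _)).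
apply: eqmx_trans (eqmx_mxcol _) (eqmx_sums _) => i _; apply/eqmxP.
rewrite !genmxE /blk_emb mul_mxrow; apply/eqmxP.
rewrite (eq_mxrow (fun j => _ : _ = (colsub_set (A i) V)^T *m (if j == i then 1%:M else 0))) //.
by move=> j; case: eqP; rewrite ?mulmx1 ?mulmx0 ?trmx0.
Qed.

Lemma mxrank_blk_space V A :
  \rank (blk_space V A) = (\sum_i \rank (colsub_set (A i) V)^T)%N.
Proof.
rewrite (mxdirectP (mxdirect_sums_blk_emb _)) /=; apply: eq_bigr => i _.
by rewrite mxrank_gen mxrankMfree ?row_free_blk_emb.
Qed.

Lemma diag_emb_cap_blk_space V A : (0 < l)%N ->
  (diag_emb F m l :&: blk_space V A :=: (\bigcap_i colspan (A i) V) *m diag_emb F m l)%MS.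
Proof.
move=> l_gt0; apply/eqmxP/andP; split.
  have /submxP[u uE] := capmxSl (diag_emb F m l) (blk_space V A).
  have /sub_sums_blk_embP subX := capmxSr (diag_emb F m l) (blk_space V A).
  rewrite uE submxMr //; apply/sub_bigcapmxP => i _.
  by have := subX i; rewrite uE submxrow_diag_emb /colspan genmxE.
rewrite sub_capmx submxMl; apply/sub_sums_blk_embP => i /=.
by rewrite submxrow_diag_emb (bigcapmx_inf i) // /colspan genmxE.
Qed.

Lemma mxrank_Gblock_dim_cap V A : (0 < l)%N ->
  (\rank (Gblock A V) + dim_cap A V = m + \sum_i \rank (colsub_set (A i) V)^T)%N.
Proof.
move=> l_gt0; rewrite mxrank_Gblock /dim_cap.
rewrite -(mxrankMfree _ (row_free_diag_emb F m l_gt0)) -diag_emb_cap_blk_space //.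
by rewrite mxrank_sum_cap (eqP (row_free_diag_emb F m l_gt0)) mxrank_blk_space.
Qed.

Lemma full_col_rank_GblockE V A : (0 < l)%N ->
  full_col_rank (Gblock A V) =
  (dim_cap A V == 0%N) && [forall i, row_free (colsub_set (A i) V)^T].
Proof.
move=> l_gt0; have rkE := mxrank_Gblock_dim_cap V A l_gt0.
have [rk_le rk_eq] : (\sum_i \rank (colsub_set (A i) V)^T <= \sum_i #|A i|
    ?= iff [forall i, row_free (colsub_set (A i) V)^T])%N.
  by apply: leqif_sum => i _; apply/leqif_eq/rank_leq_row.
rewrite /full_col_rank -rk_eq; move: rkE rk_le.
set r := \rank _; set d := dim_cap _ _; set s := (\sum_i _)%N; set c := (\sum_i _)%N.
by case: (ltngtP s c) => [|//|->]; case: eqP; lia.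
Qed.

End GblockRank.

Section GblockFamilies.
Variables (F : fieldType) (m n : nat).
Implicit Types V : 'M[F]_(m, n).

Lemma mxrank_GblockS l V (A B : 'I_l -> {set 'I_n}) :
  (forall i, A i \subset B i) -> (\rank (Gblock A V) <= \rank (Gblock B V))%N.
Proof.
move=> sAB; rewrite !mxrank_Gblock mxrankS // addsmxS // sumsmxS // => i _.
by rewrite !genmxE submxMr //; have := colspanS V (sAB i); rewrite /colspan !genmxE.
Qed.

Lemma blk_space_pairs l V (A : 'I_l -> {set 'I_n}) :
  (blk_space V A :=: \sum_(p | p.2 \in A p.1) <<row p.2 V^T *m blk_emb F m p.1>>)%MS.
Proof.
apply: eqmx_trans (eqmx_sums (B := fun i =>
  (\sum_(j in A i) <<row j V^T *m blk_emb F m i>>)%MS) _) _; last by rewrite pair_big_dep.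
move=> i _; apply: eqmx_trans (genmxE _) _.
apply: eqmx_trans (eqmxMr _ (eqmx_colsub_set V (A i))) _.
apply: eqmx_trans (sumsmxMr_gen _ _ _) (eqmx_sums _) => j _.
by apply/eqmxP; rewrite !genmxE; apply/eqmxP/eqmxMr/genmxE.
Qed.

Lemma mxrank_Gblock_pairs l V (A : 'I_l -> {set 'I_n}) :
  \rank (Gblock A V) = \rank (diag_emb F m l +
    \sum_(p | p.2 \in A p.1) <<row p.2 V^T *m blk_emb F m p.1>>)%MS.
Proof.
by rewrite mxrank_Gblock; apply/eqmx_rank/eqmxP; apply: adds_eqmx (blk_space_pairs _ _).
Qed.

Lemma exists_full_Gblock_subfamily l V (A : 'I_l -> {set 'I_n}) : (0 < l)%N ->
  exists2 B : 'I_l -> {set 'I_n}, (forall i, B i \subset A i) &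
    full_col_rank (Gblock B V) /\ \rank (Gblock B V) = \rank (Gblock A V).
Proof.
move=> l_gt0; pose w (p : 'I_l * 'I_n) := row p.2 V^T *m blk_emb F m p.1.
have rkE (C : 'I_l -> {set 'I_n}) (R : {set 'I_l * 'I_n}) :
    (forall i j, (j \in C i) = ((i, j) \in R)) ->
    \rank (Gblock C V) = \rank (diag_emb F m l + \sum_(p in R) <<w p>>)%MS.
  by move=> CR; rewrite mxrank_Gblock_pairs; congr (\rank (_ + _)); apply: eq_bigl => -[i j].
have [Q sQA [rkQ /eqmxP eqQ]] :=
  exists_basis_extension (diag_emb F m l) w [set p : 'I_l * 'I_n | p.2 \in A p.1].
pose B i := [set j | (i, j) \in Q]; exists B.
  by move=> i; apply/subsetP => j; rewrite inE => /(subsetP sQA); rewrite inE.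
have cardQ : #|Q| = (\sum_i #|B i|)%N.
  rewrite -sum1_card (eq_bigl (fun p => predT p.1 && (p.2 \in B p.1))) => [|[i j]]; last first.
    by rewrite /= inE.
  rewrite -(pair_big_dep predT (fun i j => j \in B i) (fun _ _ => 1%N)).
  by apply: eq_bigr => i _; rewrite sum1_card.
have rkB : \rank (Gblock B V) = \rank (diag_emb F m l + \sum_(p in Q) <<w p>>)%MS.
  by apply: rkE => i j; rewrite inE.
rewrite /full_col_rank (rkE A [set p | p.2 \in A p.1]) => [|i j]; last by rewrite inE.
by rewrite eqQ rkB rkQ (eqP (row_free_diag_emb F m l_gt0)) cardQ.
Qed.

Lemma full_col_rank_Gblock_comp l l' (s : 'I_l -> 'I_l') (t : 'I_l' -> 'I_l)
    V (B : 'I_l' -> {set 'I_n}) :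
  cancel t s -> (0 < l')%N ->
  full_col_rank (Gblock (B \o s) V) = full_col_rank (Gblock B V).
Proof.
move=> tK l'_gt0; have l_gt0 := leq_ltn_trans (leq0n _) (ltn_ord (t (Ordinal l'_gt0))).
rewrite !full_col_rank_GblockE //; congr andb.
  congr (_ == 0%N); apply/eqmx_rank/andP; split; apply/sub_bigcapmxP => i _.
    by rewrite (bigcapmx_inf (t i)) //= tK.
  exact: (bigcapmx_inf (s i)).
by apply/forallP/forallP => freeB i; [rewrite -(tK i); apply: freeB | apply: freeB].
Qed.

Lemma mxrank_Gblock_const l V S : (0 < l)%N ->
  \rank (Gblock (fun _ : 'I_l => S) V) = (m + l.-1 * \rank (colsub_set S V)^T)%N.
Proof.
move=> l_gt0; have := mxrank_Gblock_dim_cap V (fun _ : 'I_l => S) l_gt0.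
rewrite dim_cap_const //.
have -> : (\sum_(i < l) \rank (colsub_set S V)^T = l * \rank (colsub_set S V)^T)%N.
  by rewrite sum_nat_const card_ord.
nia.
Qed.

Lemma full_col_rank_Gblock2 V (A : 'I_2 -> {set 'I_n}) :
  full_col_rank (Gblock A V) =
  [disjoint A ord0 & A ord_max] && row_free (colsub_set (A ord0 :|: A ord_max) V)^T.
Proof.
have := mxrank_Gblock_dim_cap V A (ltn0Sn 1); rewrite /full_col_rank /row_free.
set R := \rank (Gblock A V).
have -> : dim_cap A V = \rank (colspan (A ord0) V :&: colspan (A ord_max) V)%MS.
  rewrite /dim_cap !big_ord_recl big_ord0 capmx1.
  by congr (\rank (_ :&: colspan (A _) V)); apply: val_inj.
rewrite !big_ord_recl !big_ord0 !addn0.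
have -> : lift ord0 ord0 = ord_max :> 'I_2 by apply: val_inj.
have := mxrank_sum_cap (colspan (A ord0) V) (colspan (A ord_max) V).
rewrite -colspanU !mxrank_gen.
have := rank_leq_row (colsub_set (A ord0) V)^T; have := rank_leq_row (colsub_set (A ord_max) V)^T.
have := rank_leq_row (colsub_set (A ord0 :|: A ord_max) V)^T.
have [le_card <-] := leq_card_setU (A ord0) (A ord_max); move: le_card.
by move=> *; apply/eqP/andP => [?|[/eqP ? /eqP ?]]; [split; apply/eqP|]; lia.
Qed.

Lemma full_col_rank_Gblock_mull l p (Q : 'M[F]_(p, m)) V (A : 'I_l -> {set 'I_n}) :
  (0 < l)%N -> row_free Q^T ->
  full_col_rank (Gblock A (Q *m V)) = full_col_rank (Gblock A V).
Proof.
move=> l_gt0 freeQ.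
have colsE S : (colsub_set S (Q *m V))^T = (colsub_set S V)^T *m Q^T.
  by rewrite /colsub_set -mulmx_colsub trmx_mul.
rewrite !full_col_rank_GblockE //; congr andb.
  rewrite /dim_cap /colspan (eq_bigr _ (fun i _ => congr1 _ (colsE (A i)))).
  by rewrite mxrank_bigcap_genMfree.
by apply: eq_forallb => i; rewrite colsE /row_free mxrankMfree.
Qed.

End GblockFamilies.

(* [Gblock] over an arbitrary ring, so that it can be formed over the polynomial ring. *)
Definition gblock (R : pzRingType) m n l (A : 'I_l -> {set 'I_n}) (M : 'M[R]_(m, n)) :=
  row_mx (\mxcol_(i < l) (1%:M : 'M[R]_m))
         (\mxblock_(i < l, j < l)
            (if i == j then colsub_set (A j) M else 0 : 'M[R]_(m, #|A j|))).

Lemma Gblock_map (R : pzRingType) (K : fieldType) (phi : {rmorphism R -> K}) m n l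
    (A : 'I_l -> {set 'I_n}) (M : 'M[R]_(m, n)) :
  Gblock A (map_mx phi M) = map_mx phi (gblock A M).
Proof.
rewrite map_row_mx; congr row_mx; apply/matrixP => i j; rewrite !mxE.
  by case: eqP => _; rewrite ?rmorph1 ?rmorph0 ?mulr1n ?mulr0n ?rmorph_nat.
by case: eqP => _; rewrite !mxE ?rmorph0.
Qed.

Definition generic_mpoly (F : fieldType) m n : 'M[{mpoly F[m * n]}]_(m, n) :=
  \matrix_(i, j) 'X_(mxvec_index i j).

Section Specialization.
Variables (F : fieldType) (m n : nat).

Lemma generic_frac : generic F m n = map_mx (@tofrac _) (generic_mpoly F m n).
Proof. by apply/matrixP => i j; rewrite !mxE. Qed.

Lemma map_generic_mpoly (K : fieldType) (f : {rmorphism F -> K}) (V : 'M[K]_(m, n)) :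
  map_mx (mmap f (fun t => mxvec V 0 t)) (generic_mpoly F m n) = V.
Proof. by apply/matrixP => i j; rewrite !mxE mmapX mmap1U mxvecE. Qed.

Lemma mxrank_Gblock_le_generic (K : fieldType) (f : {rmorphism F -> K})
    (V : 'M[K]_(m, n)) l (A : 'I_l -> {set 'I_n}) :
  (\rank (Gblock A V) <= \rank (Gblock A (generic F m n)))%N.
Proof.
by rewrite -(map_generic_mpoly f V) generic_frac !Gblock_map mxrank_map_le_frac.
Qed.

Lemma mxrank_colsub_set_le_generic (K : fieldType) (f : {rmorphism F -> K})
    (V : 'M[K]_(m, n)) (S : {set 'I_n}) :
  (\rank (colsub_set S V)^T <= \rank (colsub_set S (generic F m n))^T)%N.
Proof.
rewrite -(map_generic_mpoly f V) generic_frac /colsub_set -!map_mxsub !map_trmx.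
exact: mxrank_map_le_frac.
Qed.

Lemma row_free_colsub_set_generic (S : {set 'I_n}) :
  (#|S| <= m)%N -> row_free (colsub_set S (generic F m n))^T.
Proof.
move=> le_S_m; rewrite -row_leq_rank.
pose E : 'M[F]_(m, n) := \matrix_(i, j) ((j \in S) && (i == index j (enum S) :> nat))%:R.
have ES : (colsub_set S E)^T = pid_mx #|S|.
  apply/matrixP => t i; rewrite !mxE enum_valP /= eq_sym.
  by rewrite /enum_val index_uniq ?enum_uniq -?cardE ?ltn_ord ?andbT.
by have := mxrank_colsub_set_le_generic idfun E S; rewrite ES rank_pid_mx.
Qed.

Lemma full_col_rank_Gblock_generic_le m' l (A : 'I_l -> {set 'I_n}) :
  (m' <= m)%N -> (0 < l)%N ->
  full_col_rank (Gblock A (generic F m' n)) -> full_col_rank (Gblock A (generic F m n)).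
Proof.
move=> le_m'm l_gt0 fullW'; pose Z := (pid_mx m' : 'M_(m, m')) *m generic F m' n.
apply: (@full_col_rank_leq _ _ _ _ _ (Gblock A Z)).
  by rewrite full_col_rank_Gblock_mull // tr_pid_mx /row_free rank_pid_mx.
by have := mxrank_Gblock_le_generic (@tofrac _ \o @mpolyC (m' * n) F : {rmorphism F -> _}) Z A.
Qed.

End Specialization.

Lemma dim_cap_eq_of_mxrank_Gblock (K K' : fieldType) m n l
    (V : 'M[K]_(m, n)) (W : 'M[K']_(m, n)) :
  (1 < l)%N -> (forall A : 'I_l -> {set 'I_n}, \rank (Gblock A V) = \rank (Gblock A W)) ->
  forall A : 'I_l -> {set 'I_n}, dim_cap A V = dim_cap A W.
Proof.
move=> l_gt1 rkE A; have l_gt0 := ltnW l_gt1.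
have colsE S : \rank (colsub_set S V)^T = \rank (colsub_set S W)^T.
  have lpred_gt0 : (0 < l.-1)%N by rewrite -ltnS prednK.
  have /eqP := rkE (fun=> S); rewrite !mxrank_Gblock_const //.
  by rewrite eqn_add2l eqn_pmul2l // => /eqP.
have sumE : (\sum_i \rank (colsub_set (A i) V)^T = \sum_i \rank (colsub_set (A i) W)^T)%N.
  by apply: eq_bigr => i _; apply: colsE.
apply/eqP; rewrite -(eqn_add2l (\rank (Gblock A W))) -{1}(rkE A).
by rewrite !mxrank_Gblock_dim_cap // sumE; apply: eqxx.
Qed.

Section RelaxedMDS.
Variables (F : fieldType) (k n : nat) (G : 'M[F]_(k, n)).

Lemma MDS_rMDS0 l : (0 < l)%N -> MDS l G -> rMDS 0 l G.
Proof.
move=> l_gt0 mds A; rewrite subn0 !full_col_rank_GblockE // mds.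
case/andP=> -> /forallP freeW; apply/forallP => i.
by rewrite /row_free -(dim_cap_const _ _ l_gt0) mds dim_cap_const //; apply: freeW.
Qed.

Lemma rMDS0_MDS l : (1 < l)%N -> rMDS 0 l G -> MDS l G.
Proof.
move=> l_gt1 rmds; have l_gt0 := ltnW l_gt1; rewrite /rMDS subn0 in rmds.
apply: dim_cap_eq_of_mxrank_Gblock => // A; apply/eqP.
rewrite eqn_leq (mxrank_Gblock_le_generic idfun) /=.
have [B sBA [fullW <-]] := exists_full_Gblock_subfamily (generic F k n) A l_gt0.
apply: leq_trans (mxrank_GblockS G sBA).
by rewrite (eqP fullW) (eqP (rmds B fullW)).
Qed.

Lemma rMDS_larger_d d d' l : (0 < l)%N -> (d <= d')%N -> rMDS d l G -> rMDS d' l G.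
Proof.
move=> l_gt0 le_dd' rmds A fullW; apply: rmds.
exact: full_col_rank_Gblock_generic_le (leq_sub2l k le_dd') l_gt0 fullW.
Qed.

Lemma rMDS_smaller_l d l l' : (0 < l')%N -> (l' <= l)%N -> rMDS d l G -> rMDS d l' G.
Proof.
move=> l'_gt0 le_l'l rmds B; pose s (i : 'I_l) := insubd (Ordinal l'_gt0) (val i).
have sK : cancel (widen_ord le_l'l) s by move=> j; apply: val_inj; rewrite val_insubd /= ltn_ord.
by rewrite -!(full_col_rank_Gblock_comp _ _ sK) //; apply: rmds.
Qed.

Lemma rMDS2P d : (k - d <= n)%N ->
  rMDS d 2 G <->
  (forall S : {set 'I_n}, #|S| = (k - d)%N -> row_free (colsub_set S G)^T).
Proof.
move=> le_kd_n; split=> [rmds S cardS | freeG A].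
  have := rmds (fun i => if i == ord0 then S else set0).
  rewrite !full_col_rank_Gblock2 /= setU0 -setI_eq0 setI0 eqxx /=.
  by apply; apply: row_free_colsub_set_generic; rewrite cardS.
rewrite !full_col_rank_Gblock2 => /andP[-> freeW] /=.
have le_U_kd := rank_leq_col (colsub_set (A ord0 :|: A ord_max) (generic F (k - d) n))^T.
rewrite (eqP freeW) in le_U_kd.
have [S sUS cardS] : exists2 S : {set 'I_n}, A ord0 :|: A ord_max \subset S & #|S| = (k - d)%N.
  by apply: exists_card_superset; rewrite le_U_kd card_ord.
exact: row_free_colsub_setS sUS (freeG S cardS).
Qed.

End RelaxedMDS.

Theorem proposition3p3 (F : fieldType) (n k : nat) (G : 'M[F]_(k, n)) (l : nat) :
  row_free G -> (2 <= l)%N ->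
  (rMDS 0 l G <-> MDS l G) /\
  (forall d, (d <= k)%N -> rMDS d l G ->
     forall d', (d < d' <= k)%N -> rMDS d' l G) /\
  (forall d, (d <= k)%N -> rMDS d l G ->
     forall l', (2 <= l' < l)%N -> rMDS d l' G) /\
  (forall d, (d <= k)%N ->
     (rMDS d 2 G <->
      forall S : {set 'I_n}, #|S| = (k - d)%N -> row_free (colsub_set S G)^T)).
Proof.
move=> freeG l_gt1; have l_gt0 := ltnW l_gt1.
split; first by split; [apply: rMDS0_MDS | apply: MDS_rMDS0].
split; first by move=> d _ rmds d' /andP[/ltnW le_dd' _]; apply: rMDS_larger_d rmds.
split; first by move=> d _ rmds l' /andP[/ltnW l'_gt0 /ltnW le_l'l]; apply: rMDS_smaller_l rmds.
move=> d _; apply: rMDS2P; rewrite (leq_trans (leq_subr d k)) //.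
by rewrite -(eqP freeG) rank_leq_col.
Qed.
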